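(* Let $G$ be a linear group (a subgroup of $GL_n(K)$ for some field $K$ and some $n$). Then the commutator subgroup $F'$ of $F$ is a set of weak identities in $G$.
   Context: Let $F$ be the free group on countably many generators $g_1,g_2,\dots$, and $F'=[F,F]$ its commutator subgroup. For $N\ge 1$, $F^{\times N}$ denotes the direct product of $N$ copies of $F$ and $i_k: F\to F^{\times N}$ the inclusion as the $k$-th factor. A subset $S\subset F$ is a set of weak identities in a group $G$ if there exists an integer $N\ge1$ such that for any elements $s_1,\dots,s_N\in S$ and any homomorphism $\rho: F^{\times N}\to G$ there is an index $k\in\{1,\dots,N\}$ with $\rho(i_k(s_k))=1$. *)

From HB Require Import structures.
From mathcomp Require Import all_boot all_order all_algebra.
Set Implicit Arguments. Unset Strict Implicit. Unset Printing Implicit Defensive.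
Import GRing.Theory.
Local Open Scope ring_scope.

(* A letter (i, false) stands for g_i, (i, true) for g_i^-1. *)
Definition letter := (nat * bool)%type.
Definition cancels (x y : letter) : bool := (x.1 == y.1) && (x.2 != y.2).

(* Free reduction via a stack. *)
Definition push (x : letter) (w : seq letter) : seq letter :=
  match w with
  | y :: w' => if cancels x y then w' else x :: w
  | [::] => [:: x]
  end.
Definition reduce (w : seq letter) : seq letter := foldr push [::] w.
Definition reduced (w : seq letter) : bool := reduce w == w.

Definition FG := {w : seq letter | reduced w}.
Definition fone : FG := exist _ [::] (eqxx _).
Definition fmul (a b : FG) : FG := insubd fone (reduce (val a ++ val b)).
Definition finv (a : FG) : FG :=
  insubd fone (reduce (rev (map (fun x : letter => (x.1, ~~ x.2)) (val a)))).
Definition fgen (i : nat) : FG := insubd fone [:: (i, false)].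
Definition fcomm (a b : FG) : FG := fmul (fmul (finv a) (finv b)) (fmul a b).

Inductive in_derived : FG -> Prop :=
  | der_comm a b : in_derived (fcomm a b)
  | der_one : in_derived fone
  | der_mul a b : in_derived a -> in_derived b -> in_derived (fmul a b)
  | der_inv a : in_derived a -> in_derived (finv a).

Definition FN (N : nat) := {ffun 'I_N -> FG}.
Definition FNmul N (x y : FN N) : FN N := [ffun i => fmul (x i) (y i)].
Definition incl N (k : 'I_N) (s : FG) : FN N :=
  [ffun j => if j == k then s else fone].

Definition is_linear_group (K : fieldType) (n : nat) (G : 'M[K]_n -> Prop) :=
  [/\ forall A, G A -> A \in unitmx,
      G 1%:M,
      forall A B, G A -> G B -> G (A *m B)
    & forall A, G A -> G (invmx A)].

Definition is_hom_into (K : fieldType) (n N : nat) (G : 'M[K]_n -> Prop)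
    (rho : FN N -> 'M[K]_n) :=
  (forall x, G (rho x)) /\ (forall x y, rho (FNmul x y) = rho x *m rho y).

Definition weak_identities (K : fieldType) (n : nat) (G : 'M[K]_n -> Prop)
    (S : FG -> Prop) :=
  exists N : nat, (1 <= N)%N /\
    forall s : 'I_N -> FG, (forall k, S (s k)) ->
    forall rho : FN N -> 'M[K]_n, is_hom_into G rho ->
    exists k : 'I_N, rho (incl k (s k)) = 1%:M.

From Pilot Require Import Defs.
From mathcomp Require Import all_boot all_order all_algebra.
From Stdlib Require Import Classical.
Set Implicit Arguments. Unset Strict Implicit. Unset Printing Implicit Defensive.
Local Open Scope ring_scope.

(* For N > n^2, some factor i_k(F) of F^N has a commutative image under any
   multiplicative rho : F^N -> M_n(K), and F' dies in every abelian image.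
   Indeed, the span of the images of elements supported on the first k
   factors centralizes the images of the later factors. Hence either the
   image of the k-th factor lies in that span and then commutes with itself,
   or the span strictly grows when the k-th factor is added; the latter can
   happen at most n^2 times. *)

Definition nocancel (x y : letter) : bool := ~~ cancels x y.
Definition push_word (u w : seq letter) : seq letter := foldr push w u.
Definition inv_word (w : seq letter) : seq letter :=
  rev (map (fun x : letter => (x.1, ~~ x.2)) w).

Lemma push_sorted x w : sorted nocancel w -> sorted nocancel (push x w).
Proof.
case: w => [|y w] //= sw.
by case: ifP => xy; [exact: path_sorted sw | rewrite /= /nocancel xy].
Qed.

Lemma push_word_sorted u w : sorted nocancel w -> sorted nocancel (push_word u w).
Proof. by elim: u => [|x u IHu] //= sw; apply/push_sorted/IHu. Qed.

Lemma reduce_sorted w : sorted nocancel (reduce w).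
Proof. exact: push_word_sorted. Qed.

Lemma cancels_eq x y z : cancels x y -> cancels y z -> x = z.
Proof.
case: x y z => [x1 x2] [y1 y2] [z1 z2].
rewrite /cancels /= => /andP[/eqP -> xy] /andP[/eqP -> yz].
by case: x2 y2 z2 xy yz => [] [] [].
Qed.

Lemma push_cancel x y w :
  cancels x y -> sorted nocancel w -> push x (push y w) = w.
Proof.
move=> xy; case: w => [|z w] /=; first by rewrite xy.
case: ifP => [yz | _ _]; last by rewrite /= xy.
rewrite -(cancels_eq xy yz); case: w => [|t w] //= /andP[xt _].
by rewrite (negbTE xt).
Qed.

Lemma push_word_push x u w :
  sorted nocancel w -> push_word (push x u) w = push x (push_word u w).
Proof.
move=> sw; case: u => [|y u] //=; case: ifP => xy //=.
by rewrite push_cancel // push_word_sorted.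
Qed.

Lemma push_word_reduce u w :
  sorted nocancel w -> push_word (reduce u) w = push_word u w.
Proof. by move=> sw; elim: u => [|x u IHu] //=; rewrite push_word_push // IHu. Qed.

Lemma reduce_cat u v : reduce (u ++ v) = push_word u (reduce v).
Proof. exact: foldr_cat. Qed.

Lemma reduced_reduce w : reduced (reduce w).
Proof. by apply/eqP/push_word_reduce. Qed.

Lemma push_word_inv u w : push_word (inv_word u) (u ++ w) = w.
Proof.
elim: u => [|x u IHu] //=.
rewrite /inv_word /= rev_cons -cats1 /push_word foldr_cat /= /cancels /= eqxx.
by case: x.2; exact: IHu.
Qed.

Lemma reduce_val (a : FG) : reduce (val a) = val a.
Proof. by apply/eqP; case: a. Qed.

Lemma sorted_val (a : FG) : sorted nocancel (val a).
Proof. by rewrite -reduce_val reduce_sorted. Qed.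

Lemma fmulE a b : val (fmul a b) = reduce (val a ++ val b).
Proof. by rewrite /fmul val_insubd reduced_reduce. Qed.

Lemma finvE a : val (Defs.finv a) = reduce (inv_word (val a)).
Proof. by rewrite /Defs.finv val_insubd reduced_reduce. Qed.

Lemma fmul1f : left_id fone fmul.
Proof. by move=> a; apply: val_inj; rewrite fmulE reduce_val. Qed.

Lemma fmulf1 : right_id fone fmul.
Proof. by move=> a; apply: val_inj; rewrite fmulE cats0 reduce_val. Qed.

Lemma fmulVf a : fmul (Defs.finv a) a = fone.
Proof.
apply: val_inj; rewrite fmulE finvE reduce_cat reduce_val.
by rewrite push_word_reduce ?sorted_val // -[X in push_word _ X]cats0 push_word_inv.
Qed.

Section DerivedInAbelianKernel.

Variables (T : Type) (op : T -> T -> T) (e : T) (f : FG -> T).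
Hypotheses (opA : associative op) (op1 : right_id e op).
Hypotheses (fM : {morph f : a b / fmul a b >-> op a b}) (f1 : f fone = e).
Hypothesis fC : forall a b, op (f a) (f b) = op (f b) (f a).

Lemma derived_in_abelian_kernel s : in_derived s -> f s = e.
Proof.
have fVf a : op (f (Defs.finv a)) (f a) = e by rewrite -fM fmulVf.
elim=> {s} [a b | | a b _ fa _ fb | a _ fa] //.
- rewrite /fcomm !fM [op (f a) _]fC opA -[op _ (f b)]opA [op _ (f b)]fVf op1.
  exact: fVf.
- by rewrite fM fa fb op1.
- by rewrite -[f _]op1 -fa fVf.
Qed.

End DerivedInAbelianKernel.

Section DirectPower.

Variable N : nat.

Lemma FNmul_incl (k : 'I_N) a b : FNmul (incl k a) (incl k b) = incl k (fmul a b).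
Proof. by apply/ffunP => j; rewrite !ffunE; case: eqP; rewrite ?fmul1f. Qed.

Lemma FNmulC_incl (x : FN N) (j : 'I_N) b :
  x j = fone -> FNmul x (incl j b) = FNmul (incl j b) x.
Proof.
move=> xj; apply/ffunP => i; rewrite !ffunE.
by case: eqP => [-> | _]; rewrite ?xj fmul1f fmulf1.
Qed.

End DirectPower.

Lemma unitmx_idem (K : fieldType) n (A : 'M[K]_n) :
  A \in unitmx -> A *m A = A -> A = 1%:M.
Proof. by move=> uA AA; rewrite -[LHS](mulKmx uA A) AA mulVmx. Qed.

Lemma cent_mxvec (K : fieldType) n (A B : 'M[K]_n) :
  A *m B = B *m A -> (B \in 'C(mxvec A))%MS.
Proof. by move=> AB; apply/cent_rowP => i; rewrite row_id mxvecK. Qed.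

Lemma cent_mx_adds (K : fieldType) m1 m2 n
    (R1 : 'A[K]_(m1, n)) (R2 : 'A_(m2, n)) B :
  (B \in 'C(R1))%MS -> (B \in 'C(R2))%MS -> (B \in 'C(R1 + R2))%MS.
Proof.
move=> /cent_mxP cR1 /cent_mxP cR2.
apply/cent_mxP => _ /memmx_addsP[A [R1A R2A ->]].
by rewrite mulmxDl mulmxDr cR1 ?cR2.
Qed.

Lemma cent_mx0 (K : fieldType) n (B : 'M[K]_n) : (B \in 'C(0 : 'A_n))%MS.
Proof. by apply/cent_mxP => A /memmx0 ->; rewrite mul0mx mulmx0. Qed.

Section CentralizingChain.

Variables (K : fieldType) (n N : nat) (rho : FN N -> 'M[K]_n).
Hypothesis rhoM : forall x y, rho (FNmul x y) = rho x *m rho y.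

Definition factor_abelian (k : 'I_N) :=
  forall a b, rho (incl k a) *m rho (incl k b) = rho (incl k b) *m rho (incl k a).

Definition supported_below (k : nat) (x : FN N) :=
  forall j : 'I_N, (k <= j)%N -> x j = fone.

Definition centralizes_from (k : nat) (M : 'A[K]_n) :=
  forall (j : 'I_N) b, (k <= j)%N -> (rho (incl j b) \in 'C(M))%MS.

Lemma supported_below_commute k x (j : 'I_N) b :
  supported_below k x -> (k <= j)%N ->
  rho x *m rho (incl j b) = rho (incl j b) *m rho x.
Proof. by move=> xk kj; rewrite -!rhoM FNmulC_incl ?xk. Qed.

Lemma incl_supported_below (k : 'I_N) a : supported_below k.+1 (incl k a).
Proof. by move=> j kj; rewrite ffunE; case: eqP => // jk; rewrite jk ltnn in kj. Qed.

Lemma centralizing_chain_step (k : 'I_N) M :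
  ~ factor_abelian k -> centralizes_from k M ->
  exists M' : 'A[K]_n, (\rank M < \rank M')%N /\ centralizes_from k.+1 M'.
Proof.
move=> nab cM.
case: (classic (exists x, supported_below k.+1 x /\ ~~ (rho x \in M)%MS)).
  move=> [x [xk xM]]; exists (M + mxvec (rho x))%MS; split.
    by apply: rank_ltmx; rewrite ltmxE addsmxSl addsmx_sub submx_refl (negbTE xM).
  move=> j b kj; apply: cent_mx_adds; first exact/cM/ltnW.
  by apply/cent_mxvec/(supported_below_commute _ xk).
move=> inM; case: nab => a b.
have kaM : (rho (incl k a) \in M)%MS.
  apply/negPn/negP => kaM; apply: inM.
  by exists (incl k a); split; first exact: incl_supported_below.
by apply/(cent_mxP (cM k b (leqnn k))).
Qed.

Lemma centralizing_chain :
  (forall k, ~ factor_abelian k) ->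
  forall k, (k <= N)%N ->
  exists M : 'A[K]_n, (k <= \rank M)%N /\ centralizes_from k M.
Proof.
move=> nab; elim=> [_ | k IHk kN].
  by exists 0; split=> // j b _; apply: cent_mx0.
have [M [kM cM]] := IHk (ltnW kN).
have [M' [MM' cM']] := centralizing_chain_step (nab (Ordinal kN)) cM.
by exists M'; split=> //; apply: leq_ltn_trans MM'.
Qed.

Lemma exists_factor_abelian : (n * n < N)%N -> exists k, factor_abelian k.
Proof.
move=> nN; apply: NNPP => nab.
have [M [NM _]] := centralizing_chain (fun k ab => nab (ex_intro _ k ab)) (leqnn N).
by move: (leq_trans NM (rank_leq_col M)); rewrite leqNgt nN.
Qed.

End CentralizingChain.

Theorem theorem3p4 (K : fieldType) (n : nat) (G : 'M[K]_n -> Prop) :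
  is_linear_group G -> weak_identities G in_derived.
Proof.
move=> [Gunit _ _ _]; exists (n * n).+1; split=> // s sF' rho [rhoG rhoM].
have [k ab] := exists_factor_abelian rhoM (ltnSn _); exists k.
apply: (derived_in_abelian_kernel (@mulmxA _ _ _ _ _) (@mulmx1 _ _ _) _ _ ab).
- by move=> a b /=; rewrite -rhoM FNmul_incl.
- apply: unitmx_idem; first exact/Gunit/rhoG.
  by rewrite -rhoM FNmul_incl fmul1f.
- exact: sF'.
Qed.
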